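(* There is an absolute constant $C$ such that for every simple temporal clique on $n$ vertices and every backward fireworks cover $S^+_T$ of it (for any outcome of the arbitrary choices in the construction), $|S^+_T|\le \frac{3}{4}\binom{n}{2}+Cn$.
   Context: A simple temporal clique is a pair $\mathcal{G}=(G,\lambda)$ where $G=(V,E)$ is the complete graph on a finite set $V$ of $n$ vertices and $\lambda:E\to\mathbb{N}$ assigns to each edge a single integer label such that any two distinct edges sharing an endpoint have different labels; the label of an arc $(x,y)$ is $\lambda(\{x,y\})$. For a vertex $v$, $e^+(v)$ is the edge incident to $v$ with largest label. Backward construction: let $E^+$ be the set of arcs $(v,u)$ with $\{u,v\}=e^+(v)$, except that if $e^+(u)=e^+(v)=\{u,v\}$ only one of the two arcs $(u,v),(v,u)$ is included (arbitrarily). Initialize $E^+_T:=E^+$. For every vertex $v$ of in-degree at least $2$ in $(V,E^+)$, let $(u_1,v),\dots,(u_\ell,v)$ be its in-arcs in $E^+$, where $(u_\ell,v)$ has the smallest label; for each $i<\ell$, if $u_i$ has in-degree $0$ in $(V,E^+)$, replace $(u_i,v)$ by $(v,u_i)$ in $E^+_T$, and otherwise remove $(u_i,v)$ from $E^+_T$. A collector is a vertex of in-degree $0$ in $(V,E^+_T)$. The backward fireworks cover is $S^+_T=\{\{u,v\}\in E:(u,v)\in E^+_T\}\cup\{\{u,v\}\in E: u \text{ is a collector}\}$. *)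

From mathcomp Require Import all_boot.
Set Implicit Arguments. Unset Strict Implicit. Unset Printing Implicit Defensive.

Section Fireworks.
Variable V : finType.

(* A simple temporal clique on the complete graph with vertex set V:
   lam x y is the label of the edge {x,y} (for x != y), symmetric, and
   two distinct edges sharing an endpoint have different labels. *)
Definition simple_temporal_clique (lam : V -> V -> nat) : Prop :=
  (forall x y, lam x y = lam y x) /\
  (forall x y z, x != y -> x != z -> y != z -> lam x y != lam x z).

(* p v is the other endpoint of e^+(v), the edge at v with largest label
   (unique by local injectivity of lam). *)
Definition is_eplus (lam : V -> V -> nat) (p : V -> V) : Prop :=
  forall v, p v != v /\ (forall w, w != v -> lam v w <= lam v (p v)).

(* A is a valid choice of E^+: the arcs (v, p v), except that for a mutual
   pair (p (p v) = v) exactly one of the two opposite arcs is kept. *)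
Definition is_Eplus (p : V -> V) (A : {set V * V}) : Prop :=
  [/\ (forall a, a \in A -> a.2 = p a.1),
      (forall v, ((v, p v) \in A) || ((p v, v) \in A)) &
      (forall u v, (u, v) \in A -> (v, u) \notin A)].

Definition indeg (B : {set V * V}) (v : V) : nat := #|[set u | (u, v) \in B]|.

Definition min_in_arc (lam : V -> V -> nat) (A : {set V * V}) (u v : V) : bool :=
  [forall w, ((w, v) \in A) ==> (lam u v <= lam w v)].

Definition ET (lam : V -> V -> nat) (A : {set V * V}) : {set V * V} :=
  [set a in A | (indeg A a.2 < 2) || min_in_arc lam A a.1 a.2]
  :|: [set (a.2, a.1) | a in [set a in A | [&& 2 <= indeg A a.2,
                                              ~~ min_in_arc lam A a.1 a.2 &
                                              indeg A a.1 == 0]]].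

Definition collector (lam : V -> V -> nat) (A : {set V * V}) (u : V) : bool :=
  indeg (ET lam A) u == 0.

Definition backward_fireworks_cover (lam : V -> V -> nat) (A : {set V * V})
  : {set {set V}} :=
  [set [set a.1; a.2] | a in ET lam A]
  :|: [set [set a.1; a.2] | a in [set a : V * V | collector lam A a.1 & a.1 != a.2]].

End Fireworks.

From mathcomp Require Import all_boot zify.

Set Implicit Arguments. Unset Strict Implicit. Unset Printing Implicit Defensive.

(* A collector u has no in-arc in E^+: otherwise the in-arc of smallest
   label into u would survive in E^+_T.  Hence its own arc (u, p u) is in
   E^+ and survives too (it cannot be reversed into u, since u is a
   collector), so it is the unique surviving in-arc of p u
   (the only in-arc, or the one of smallest label, which local injectivity
   makes unique).  Thus p maps collectors injectively to non-collectors, so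
   at least n/2 vertices are not collectors.  The cover consists of at most
   2n arcs of E^+_T plus edges meeting a collector, and there are at most
   C(n,2) - C(n/2,2) = 3/4 C(n,2) + O(n) of the latter. *)

Lemma card_draws_not_subset (T : finType) (D : {set T}) k :
  #|[set B : {set T} | #|B| == k & ~~ (B \subset D)]| = 'C(#|T|, k) - 'C(#|D|, k).
Proof.
set drawsT := [set B : {set T} | #|B| == k].
set drawsD := [set B : {set T} | B \subset D & #|B| == k].
have sub_draws : drawsD \subset drawsT by apply/subsetP => B; rewrite !inE => /andP[].
rewrite -card_draws -cards_draws -/drawsT -/drawsD -(setIidPr sub_draws) -cardsD.
by apply: eq_card => B; rewrite !inE; case: (B \subset D); rewrite ?andbT ?andbF ?andNb.
Qed.

Lemma bin2_sub_le m n : n <= 2 * m ->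
  4 * ('C(n, 2) - 'C(m, 2)) <= 3 * 'C(n, 2) + n.
Proof.
move=> le_n_2m.
have := mul_bin_diag n 1; have := mul_bin_diag m 1; rewrite !bin1.
nia.
Qed.

Section BackwardFireworks.
Variables (V : finType) (lam : V -> V -> nat) (p : V -> V) (A : {set V * V}).
Hypotheses (lamP : simple_temporal_clique lam) (pP : is_eplus lam p)
  (AP : is_Eplus p A).

Definition collectors : {set V} := [set u | collector lam A u].

Lemma Eplus_target a : a \in A -> a.2 = p a.1.
Proof. by case: AP => target _ _; apply: target. Qed.

Lemma Eplus_neq u v : (u, v) \in A -> v != u.
Proof. by move/Eplus_target => /= ->; case: (pP u). Qed.

Lemma card_Eplus : #|A| <= #|V|.
Proof.
have sub_graph : A \subset [set (v, p v) | v : V].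
  by apply/subsetP => -[u v] uv; apply/imsetP; exists u; rewrite -?(Eplus_target uv).
exact: leq_trans (subset_leq_card sub_graph) (leq_imset_card _ _).
Qed.

Lemma card_ET : #|ET lam A| <= 2 * #|V|.
Proof.
have card_sub_A (P : pred (V * V)) : #|[set a in A | P a]| <= #|V|.
  by apply: leq_trans card_Eplus; apply/subset_leq_card/subsetP => a; rewrite inE => /andP[].
apply: leq_trans (leq_card_setU _ _) _.
by rewrite mul2n -addnn leq_add // (leq_trans (leq_imset_card _ _)).
Qed.

Lemma ET_min_in_arc u v :
  (u, v) \in A -> min_in_arc lam A u v -> (u, v) \in ET lam A.
Proof. by move=> uv min_uv; rewrite in_setU inE /= uv min_uv orbT. Qed.

Lemma ET_reversed u v : (u, v) \in A -> 2 <= indeg A v ->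
  ~~ min_in_arc lam A u v -> indeg A u = 0 -> (v, u) \in ET lam A.
Proof.
move=> uv indeg_v not_min indeg_u.
rewrite in_setU; apply/orP; right; apply/imsetP; exists (u, v) => //.
by rewrite !inE uv indeg_v not_min indeg_u.
Qed.

Lemma indeg_ET_gt0 u v : (u, v) \in A -> 0 < indeg (ET lam A) v.
Proof.
move=> uv; apply/card_gt0P.
case: (@arg_minnP _ u (fun w => (w, v) \in A) (fun w => lam w v) uv) => w wv w_min.
by exists w; rewrite inE ET_min_in_arc //; apply/forallP => x; apply/implyP/w_min.
Qed.

Lemma min_in_arc_uniq u u' v : (u, v) \in A -> (u', v) \in A ->
  min_in_arc lam A u v -> min_in_arc lam A u' v -> u = u'.
Proof.
move=> uv u'v /forallP/(_ u')/implyP/(_ u'v) le_uu' /forallP/(_ u)/implyP/(_ uv) le_u'u.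
have [lam_sym lam_inj] := lamP.
have eq_lam : lam v u = lam v u' by rewrite !(lam_sym v); apply/eqP; rewrite eqn_leq le_uu' le_u'u.
case: (eqVneq u u') => // neq_uu'.
by move: (lam_inj v u u' (Eplus_neq uv) (Eplus_neq u'v) neq_uu'); rewrite eq_lam eqxx.
Qed.

Lemma collector_noin u w : collector lam A u -> (w, u) \notin A.
Proof. by apply: contraL => /indeg_ET_gt0; rewrite lt0n. Qed.

Section Collector.
Variable u : V.
Hypothesis u_coll : collector lam A u.

Lemma collector_arc : (u, p u) \in A.
Proof.
by case: AP => _ /(_ u) /orP[] // pu_u _; move: (collector_noin (p u) u_coll); rewrite pu_u.
Qed.

Lemma collector_arc_kept : (indeg A (p u) < 2) || min_in_arc lam A u (p u).
Proof.
case: ltnP => //= indeg_pu; apply: contraLR u_coll => not_min.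
have indeg_u : indeg A u = 0.
  by apply: eq_card0 => w; rewrite inE (negbTE (collector_noin w u_coll)).
rewrite /collector -lt0n; apply/card_gt0P; exists (p u); rewrite inE.
exact: ET_reversed collector_arc indeg_pu not_min indeg_u.
Qed.

Lemma collector_target : p u \notin collectors.
Proof. by rewrite inE; apply: contraL collector_arc => /(collector_noin u). Qed.

End Collector.

Lemma collectors_inj : {in collectors &, injective p}.
Proof.
move=> u u'; rewrite !inE => u_coll u'_coll eq_p.
have uv := collector_arc u_coll; have u'v := collector_arc u'_coll.
rewrite -eq_p in u'v.
have := collector_arc_kept u_coll; have := collector_arc_kept u'_coll.
rewrite -eq_p; case: ltnP => [indeg_small _ _ | _ /= min_u' min_u].
  by move/card_le1_eqP: indeg_small; apply; rewrite inE.
exact: min_in_arc_uniq uv u'v min_u min_u'.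
Qed.

Lemma card_collectors : #|collectors| <= #|~: collectors|.
Proof.
rewrite -(card_in_imset collectors_inj); apply/subset_leq_card/subsetP => v.
by case/imsetP => u; rewrite inE => u_coll ->; rewrite inE collector_target.
Qed.

Lemma card_cover : #|backward_fireworks_cover lam A|
  <= 2 * #|V| + ('C(#|V|, 2) - 'C(#|~: collectors|, 2)).
Proof.
apply: leq_trans (leq_card_setU _ _) _.
apply: leq_add; first exact: leq_trans (leq_imset_card _ _) card_ET.
rewrite -card_draws_not_subset; apply/subset_leq_card/subsetP => B.
case/imsetP => -[u v]; rewrite inE /= => /andP[u_coll neq_uv] ->.
rewrite inE cards2 neq_uv; apply/subsetPn; exists u; by rewrite !inE ?eqxx ?negbK.
Qed.

End BackwardFireworks.

Theorem theorem5 : exists C : nat,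
  forall (V : finType) (lam : V -> V -> nat) (p : V -> V) (A : {set V * V}),
    simple_temporal_clique lam -> is_eplus lam p -> is_Eplus p A ->
    4 * #|backward_fireworks_cover lam A| <= 3 * 'C(#|V|, 2) + 4 * C * #|V|.
Proof.
exists 3 => V lam p A lamP pP AP.
have le_cover := card_cover lam AP.
have half := card_collectors lamP pP AP.
have n_le_2m : #|V| <= 2 * #|~: collectors lam A|.
  by rewrite -(cardsC (collectors lam A)); lia.
have := bin2_sub_le n_le_2m.
lia.
Qed.
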